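(* Fix reals $a<b$, $S=T\cap[a,b]$, a natural number $m\ge1$, points $q_1,\ldots,q_r\in\mathbf M$, and $-\infty\le\alpha_i\le\beta_i\le\infty$ ($i=1,\ldots,r$). Let $\Pi_1=\{x\in\mathbf M:\alpha_i\le\tau(x,q_i)\le\beta_i,\ i=1,\ldots,r\}$ and let $\mathbf\Pi\subseteq\Pi_1$. Fix $\ell$ and $a=u_1<\cdots<u_{\ell+1}=b$, and let $\mathcal A$ be a set of constraints satisfied by $(|C|,(x_i^{(k)}(C)))$ for every $S$-code $C\subset\mathbf\Pi$. Let $c^*(m)$ be the supremum of $c$ over real variables $c$, $(x_i^{(k)})_{1\le i\le\ell,0\le k\le 2m-1}$, $(y_i^{(k)})_{1\le i\le r,0\le k\le 2m-1}$ with $y_1^{(0)}=\cdots=y_r^{(0)}=c$, subject to: (7) $H_m(x_i^{(0)},\ldots,x_i^{(2m-1)},[u_i,u_{i+1}])\succeq0$, $i=1,\ldots,\ell$; (8) the constraints $\mathcal A$; (9) for $k=0,\ldots,2m-1$ the $(r+1)\times(r+1)$ symmetric matrix $G_k$ with entries $(G_k)_{ij}=\Phi_k(\tau(q_i,q_j))$ for $i,j\le r$, $(G_k)_{i,r+1}=(G_k)_{r+1,i}=\sum_{d=0}^k p_{kd}y_i^{(d)}$ for $i\le r$, and $(G_k)_{r+1,r+1}=c+\sum_{d=0}^k p_{kd}\sum_{i=1}^\ell x_i^{(d)}$, is positive semidefinite; (10) $H_m(y_i^{(0)},\ldots,y_i^{(2m-1)},[\alpha_i,\beta_i])\succeq0$,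 $i=1,\ldots,r$ (with the block $F_m^+(\alpha_i)$ omitted if $\alpha_i=-\infty$ and $F_m^-(\beta_i)$ omitted if $\beta_i=\infty$). Then $A(\mathbf\Pi,S)\le c^*(m)$.
   Context: $\mathbf M$ is a 2-point-homogeneous space with associated real function $\tau(x,y)$, $\tau_0:=\tau(x,x)$, $T=\{\tau(x,y):x,y\in\mathbf M\}$, and zonal spherical functions $\Phi_k(t)=\sum_{d=0}^k p_{kd}t^d$ assumed to be real polynomials of degree $k$ with $\Phi_k(\tau_0)=1$ such that for every finite $\{x_1,\ldots,x_N\}\subset\mathbf M$ and $k\ge0$ the matrix $(\Phi_k(\tau(x_i,x_j)))$ is positive semidefinite. An $S$-code is a finite $C\subset\mathbf M$ with $\tau(x,y)\in S$ for all distinct $x,y\in C$; $A(\mathbf\Pi,S)$ is the largest cardinality of an $S$-code contained in $\mathbf\Pi$. For an $S$-code $C=\{z_1,\ldots,z_c\}$, $x_i^{(k)}(C):=\sum\tau(z_p,z_q)^k$ over ordered pairs $p\ne q$ with $\tau(z_p,z_q)\in[u_i,u_{i+1})$ ($i<\ell$), resp. $\in[u_\ell,b]$ ($i=\ell$); $\tau^0:=1$. For reals $s_0,\ldots,s_{2m-1}$ and $\alpha<\beta$: $R_m=(s_{i+j-2})_{i,j=1}^m$, $F_m^+(\alpha)=(s_{i+j-1}-\alpha s_{i+j-2})$, $F_m^-(\beta)=(\beta s_{i+j-2}-s_{i+j-1})$, $H_m(s_0,\ldots,s_{2m-1},[\alpha,\beta])=\operatorname{diag}(R_m,F_m^+(\alpha),F_m^-(\beta))$.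 *)

From HB Require Import structures.
From mathcomp Require Import all_boot all_order all_algebra.
From mathcomp Require Import boolp classical_sets reals constructive_ereal ereal.
Set Implicit Arguments. Unset Strict Implicit. Unset Printing Implicit Defensive.
Import Order.TTheory GRing.Theory Num.Theory.
Local Open Scope ring_scope.
Local Open Scope classical_set_scope.

Section Defs.
Variable R : realType.

Definition psd n (A : 'M[R]_n) : Prop :=
  A^T = A /\ forall v : 'cV[R]_n, 0 <= (v^T *m A *m v) 0 0.

(* reading a finite sequence s_0,...,s_{n-1} at a natural index (0 outside) *)
Definition sget n (s : 'I_n -> R) (k : nat) : R := oapp s 0 (insub k).

Definition Rmx m (s : nat -> R) : 'M[R]_m := \matrix_(i < m, j < m) s (i + j)%N.
Definition Fplus m (s : nat -> R) (al : R) : 'M[R]_m :=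
  \matrix_(i < m, j < m) (s (i + j).+1 - al * s (i + j)%N).
Definition Fminus m (s : nat -> R) (be : R) : 'M[R]_m :=
  \matrix_(i < m, j < m) (be * s (i + j)%N - s (i + j).+1).

Definition Hmx m (s : nat -> R) (al be : R) : 'M[R]_(m + (m + m)) :=
  block_mx (Rmx m s) 0 0 (block_mx (Fplus m s al) 0 0 (Fminus m s be)).

Definition Hm_psd_ext m (s : nat -> R) (al be : \bar R) : Prop :=
  match al, be with
  | EFin x, EFin y => psd (Hmx m s x y)
  | EFin x, _ => psd (block_mx (Rmx m s) 0 0 (Fplus m s x))
  | _, EFin y => psd (block_mx (Rmx m s) 0 0 (Fminus m s y))
  | _, _ => psd (Rmx m s)
  end.

Variable M : Type.
Variable tau : M -> M -> R.

Definition two_point_homogeneous : Prop :=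
  forall x y x' y', tau x y = tau x' y' ->
    exists g : M -> M, bijective g /\ (forall v w, tau (g v) (g w) = tau v w)
                       /\ g x = x' /\ g y = y'.

Definition Tset : set R := [set t | exists x y, t = tau x y].
Definition Sset (a b : R) : set R := [set t | Tset t /\ a <= t <= b].

Definition Pi1 r (q : 'I_r -> M) (al be : 'I_r -> \bar R) : set M :=
  [set x | forall i, (al i <= (tau x (q i))%:E)%E /\ ((tau x (q i))%:E <= be i)%E].

(* A finite set C = {z_0,...,z_{N-1}} (z injective) which is an S-code in Pi *)
Definition Scode_in (a b : R) (Pi : set M) N (z : 'I_N -> M) : Prop :=
  injective z /\ (forall p, Pi (z p)) /\
  (forall p p', p != p' -> Sset a b (tau (z p) (z p'))).

Definition Acode (a b : R) (Pi : set M) : \bar R :=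
  ereal_sup [set (N%:R)%:E | N in [set N : nat | exists z : 'I_N -> M, Scode_in a b Pi z]].

(* interval number i (0-based, i < ell): [u_i,u_{i+1}) if i+1 < ell, [u_i,u_{i+1}] if i+1 = ell *)
Definition in_piece (ell : nat) (u : nat -> R) (i : nat) (t : R) : bool :=
  if (i.+1 < ell)%N then (u i <= t) && (t < u i.+1) else (u i <= t) && (t <= u i.+1).

Definition xmom (ell : nat) (u : nat -> R) N (z : 'I_N -> M) n (i : 'I_ell) (k : 'I_n) : R :=
  \sum_(p < N) \sum_(p' < N | (p != p') && in_piece ell u i (tau (z p) (z p')))
     tau (z p) (z p') ^+ k.

Definition Gmx (Phi : nat -> {poly R}) (k : nat) r (q : 'I_r -> M) ell n
  (c : R) (x : 'I_ell -> 'I_n -> R) (y : 'I_r -> 'I_n -> R) : 'M[R]_(r + 1) :=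
  block_mx (\matrix_(i < r, j < r) (Phi k).[tau (q i) (q j)])
           (\matrix_(i < r, j < 1) \sum_(d < k.+1) (Phi k)`_d * sget (y i) d)
           (\matrix_(i < 1, j < r) \sum_(d < k.+1) (Phi k)`_d * sget (y j) d)
           (\matrix_(i < 1, j < 1)
               (c + \sum_(d < k.+1) (Phi k)`_d * \sum_(i' < ell) sget (x i') d)).

Definition feasible_c (Phi : nat -> {poly R}) (m : nat) r (q : 'I_r -> M)
  (al be : 'I_r -> \bar R) (ell : nat) (u : nat -> R)
  (Acons : R -> ('I_ell -> 'I_(2 * m) -> R) -> Prop) : set R :=
  [set c | exists (x : 'I_ell -> 'I_(2 * m) -> R) (y : 'I_r -> 'I_(2 * m) -> R),
     (forall i, sget (y i) 0 = c) /\
     (forall i : 'I_ell, psd (Hmx m (sget (x i)) (u i) (u i.+1))) /\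
     Acons c x /\
     (forall k : 'I_(2 * m), psd (Gmx Phi k q c x y)) /\
     (forall i : 'I_r, Hm_psd_ext m (sget (y i)) (al i) (be i))].

Definition cstar Phi m r q al be ell u Acons : \bar R :=
  ereal_sup [set c%:E | c in @feasible_c Phi m r q al be ell u Acons].

End Defs.

(* Every S-code C in Pi gives a feasible point of the program with c = |C|:
   x_i^(k) = x_i^(k)(C) and y_i^(k) = sum_(z in C) tau(z, q_i)^k.  Constraints
   (7) and (10) hold because the Hankel blocks R_m, F_m^+(al), F_m^-(be) built
   from the moments of a nonnegative measure supported in [al, be] are positive
   semidefinite; here the measures count the pairwise distances of C in each
   piece, resp. the distances from C to q_i.  Constraint (9) is the positive
   semidefiniteness of the kernel Phi_k(tau) on {q_1, ..., q_r} u C after the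
   rows and columns indexed by C are summed; its corner entry is
   |C| + sum_(p <> p') Phi_k(tau(z_p, z_p')) because Phi_k(tau_0) = 1 and the
   pieces partition [a, b]. *)

From HB Require Import structures.
From mathcomp Require Import all_boot all_order all_algebra.
From mathcomp Require Import boolp classical_sets reals constructive_ereal ereal.
From mathcomp Require Import ring zify.
Set Implicit Arguments. Unset Strict Implicit. Unset Printing Implicit Defensive.
Import Order.TTheory GRing.Theory Num.Theory.
Local Open Scope ring_scope.
Local Open Scope classical_set_scope.

Section PsdMatrices.
Variable R : realType.

Lemma psd_block_diag n1 n2 (A : 'M[R]_n1) (B : 'M[R]_n2) :
  psd A -> psd B -> psd (block_mx A 0 0 B).
Proof.
move=> [At Aq] [Bt Bq]; split; first by rewrite tr_block_mx At Bt !trmx0.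
move=> v; rewrite -[v]vsubmxK tr_col_mx mul_row_block !mulmx0 addr0 add0r.
by rewrite mul_row_col mxE addr_ge0.
Qed.

Lemma psd_congr n p (A : 'M[R]_n) (B : 'M[R]_(n, p)) :
  psd A -> psd (B^T *m A *m B).
Proof.
move=> [At Aq]; split; first by rewrite !trmx_mul trmxK At mulmxA.
by move=> v; have := Aq (B *m v); rewrite trmx_mul !mulmxA.
Qed.

Lemma psd_merge_tail r N (A : 'M[R]_(r + N)) : psd A ->
  psd (block_mx (ulsubmx A) (\col_i \sum_p ursubmx A i p)
                (\row_j \sum_p dlsubmx A p j) (\sum_p \sum_p' drsubmx A p p')%:M).
Proof.
pose B : 'M[R]_(r + N, r + 1) := block_mx 1%:M 0 0 (const_mx 1).
move=> /(psd_congr B); congr psd.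
rewrite -[A in LHS]submxK tr_block_mx !mulmx_block !trmx0 !trmx1.
rewrite !mul1mx !mul0mx !mulmx1 !mulmx0 !addr0 !add0r.
congr block_mx; apply/matrixP => i j; rewrite !mxE.
- by apply: eq_bigr => p _; rewrite !mxE mulr1.
- by apply: eq_bigr => p _; rewrite !mxE mul1r.
- rewrite !ord1 eqxx mulr1n exchange_big; apply: eq_bigr => p _.
  by rewrite !mxE mulr_suml; apply: eq_bigr => p' _; rewrite !mxE mul1r mulr1.
Qed.

End PsdMatrices.

Definition moment (R : ringType) (I : finType) (P : pred I) (w t : I -> R) (k : nat) : R :=
  \sum_(j | P j) w j * t j ^+ k.

Lemma horner_moment (R : comRingType) (I : finType) (P : pred I) (w t : I -> R)
    (f : {poly R}) n :
  (size f <= n)%N ->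
  \sum_(d < n) f`_d * moment P w t d = \sum_(j | P j) w j * f.[t j].
Proof.
move=> szf; under eq_bigr do rewrite /moment mulr_sumr.
rewrite exchange_big; apply: eq_bigr => j _.
rewrite (horner_coef_wide _ szf) mulr_sumr; apply: eq_bigr => d _.
by rewrite mulrCA.
Qed.

Lemma hankel_index_lt m (i j : 'I_m) : ((i + j).+1 < 2 * m)%N.
Proof. by have := ltn_ord i; have := ltn_ord j; lia. Qed.

Section HankelMoments.
Variables (R : realType) (m : nat) (I : finType) (P : pred I).

Lemma Rmx_moment_psd (w t : I -> R) :
  (forall j, P j -> 0 <= w j) -> psd (Rmx m (moment P w t)).
Proof.
move=> w_ge0; split; first by apply/matrixP => i j; rewrite !mxE addnC.
move=> v.
have -> : (v^T *m Rmx m (moment P w t) *m v) 0 0 =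
          \sum_(j | P j) w j * (\sum_i v i 0 * t j ^+ i) ^+ 2.
  rewrite mxE; under eq_bigr do rewrite mxE big_distrl /=.
  under eq_bigr do under eq_bigr do rewrite !mxE /= big_distrr big_distrl /=.
  rewrite exchange_big /=.
  under [RHS]eq_bigr do rewrite expr2 big_distrl /= big_distrr /=.
  under eq_bigr do rewrite exchange_big /=.
  rewrite exchange_big /=; apply: eq_bigr => l _; apply: eq_bigr => j _.
  rewrite mulr_sumr big_distrr /=; apply: eq_bigr => i _; rewrite exprD; ring.
by apply: sumr_ge0 => j Pj; rewrite mulr_ge0 ?w_ge0 ?sqr_ge0.
Qed.

Variables (s : nat -> R) (w t : I -> R).
Hypothesis s_moment : forall k, (k < 2 * m)%N -> s k = moment P w t k.
Hypothesis w_ge0 : forall j, P j -> 0 <= w j.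

Lemma Rmx_psd : psd (Rmx m s).
Proof.
suff -> : Rmx m s = Rmx m (moment P w t) by exact: Rmx_moment_psd.
apply/matrixP => i j; rewrite !mxE s_moment //; exact: ltnW (hankel_index_lt i j).
Qed.

Lemma Fplus_psd al : (forall j, P j -> al <= t j) -> psd (Fplus m s al).
Proof.
move=> al_le; suff -> : Fplus m s al = Rmx m (moment P (fun j => w j * (t j - al)) t).
  by apply: Rmx_moment_psd => j Pj; rewrite mulr_ge0 ?w_ge0 ?subr_ge0 ?al_le.
apply/matrixP => i j; have ij := hankel_index_lt i j.
rewrite !mxE !s_moment ?(ltnW ij) //.
rewrite /moment mulr_sumr -sumrB; apply: eq_bigr => l _; rewrite exprS; ring.
Qed.

Lemma Fminus_psd be : (forall j, P j -> t j <= be) -> psd (Fminus m s be).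
Proof.
move=> le_be; suff -> : Fminus m s be = Rmx m (moment P (fun j => w j * (be - t j)) t).
  by apply: Rmx_moment_psd => j Pj; rewrite mulr_ge0 ?w_ge0 ?subr_ge0 ?le_be.
apply/matrixP => i j; have ij := hankel_index_lt i j.
rewrite !mxE !s_moment ?(ltnW ij) //.
rewrite /moment mulr_sumr -sumrB; apply: eq_bigr => l _; rewrite exprS; ring.
Qed.

Lemma Hmx_psd al be : (forall j, P j -> al <= t j <= be) -> psd (Hmx m s al be).
Proof.
move=> t_in; rewrite /Hmx; apply: psd_block_diag; first exact: Rmx_psd.
apply: psd_block_diag; [apply: Fplus_psd | apply: Fminus_psd] => j /t_in /andP[] //.
Qed.

Lemma Hm_psd_ext_moment (al be : \bar R) :
  (forall j, P j -> (al <= (t j)%:E <= be)%E) -> Hm_psd_ext m s al be.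
Proof.
move=> t_in; have al_le x : al = x%:E -> forall j, P j -> x <= t j.
  by move=> E j /t_in; rewrite E lee_fin => /andP[].
have le_be y : be = y%:E -> forall j, P j -> t j <= y.
  by move=> E j /t_in; rewrite E lee_fin => /andP[].
rewrite /Hm_psd_ext; case E1: al => [x| |]; case E2: be => [y| |];
  rewrite /Hmx; repeat apply: psd_block_diag;
  by [exact: Rmx_psd | exact: Fplus_psd (al_le _ E1) | exact: Fminus_psd (le_be _ E2)].
Qed.

End HankelMoments.

Section Pieces.
Variables (R : realType) (ell : nat) (u : nat -> R) (a b : R).
Hypotheses (ab : a < b) (u0 : u 0%N = a) (u_ell : u ell = b).
Hypothesis u_incr : forall i, (i < ell)%N -> u i < u i.+1.

Lemma in_piece_unique t : a <= t <= b ->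
  exists i0 : 'I_ell, forall i : 'I_ell, in_piece ell u i t = (i == i0).
Proof.
move=> /andP[a_le_t t_le_b].
have ell_gt0 : (0 < ell)%N.
  by rewrite lt0n; apply: contraTneq ab => ell0; rewrite -u0 -u_ell ell0 ltxx.
have u_le : {in [pred i | (i <= ell)%N] &, {homo u : i j / (i <= j)%N >-> i <= j}}.
  apply: homo_leq_in => [x|y x z|i j k /= ? ? /andP[_ /ltnW]|i /= _ ?].
  - exact: lexx.
  - exact: le_trans.
  - by move/leq_trans; apply.
  - exact/ltW/u_incr.
have u0_le : u (Ordinal ell_gt0) <= t by rewrite /= u0.
have [i0 /= ui0 i0_max] := @arg_maxnP _ _ [pred i : 'I_ell | u i <= t] val u0_le.
have t_in_i0 : in_piece ell u i0 t.
  rewrite /in_piece ui0 /=; case: ifP => [i0S | /negbT].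
    by rewrite ltNge; apply/negP => /(i0_max (Ordinal i0S)) /=; rewrite ltnn.
  rewrite -leqNgt => ell_le.
  have -> : i0.+1 = ell by apply: anti_leq; rewrite ell_le andbT.
  by rewrite u_ell.
have not_above (j1 j2 : 'I_ell) : (j1 < j2)%N -> in_piece ell u j1 t -> ~~ in_piece ell u j2 t.
  move=> j12; rewrite /in_piece (leq_ltn_trans j12 (ltn_ord j2)) => /andP[_ tj1].
  have j2_le : (j2 <= ell)%N := ltnW (ltn_ord j2).
  have uj : u j1.+1 <= u j2 by apply: u_le; rewrite ?inE ?(leq_trans j12).
  by apply/negP; case: ifP => _ /andP[/(le_trans uj)]; rewrite leNgt tj1.
exists i0 => i; apply/idP/eqP => [ti|-> //].
case: (ltngtP i i0) => [lt|lt|/val_inj //].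
- by move: (not_above _ _ lt ti); rewrite t_in_i0.
- by move: (not_above _ _ lt t_in_i0); rewrite ti.
Qed.

Lemma big_in_piece (V : zmodType) t (F : V) : a <= t <= b ->
  \sum_(i < ell | in_piece ell u i t) F = F.
Proof.
move=> /in_piece_unique[i0 ti].
by rewrite (eq_bigl (pred1 i0)) ?big_pred1_eq.
Qed.

End Pieces.

Section CodeMoments.
Variables (R : realType) (M : Type) (tau : M -> M -> R) (N : nat) (z : 'I_N -> M).
Variables (ell : nat) (u : nat -> R) (n : nat).

Lemma sget_xmom i d : (d < n)%N ->
  sget (@xmom R M tau ell u N z n i) d =
  moment [pred j : 'I_N * 'I_N | (j.1 != j.2) && in_piece ell u i (tau (z j.1) (z j.2))]
         (fun=> 1) (fun j => tau (z j.1) (z j.2)) d.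
Proof.
move=> dn; rewrite /sget insubT /= /xmom pair_big_dep /moment.
by apply: eq_bigr => j _; rewrite mul1r.
Qed.

Lemma sum_xmom a b d :
  a < b -> u 0%N = a -> u ell = b -> (forall i, (i < ell)%N -> u i < u i.+1) ->
  (forall p p', p != p' -> a <= tau (z p) (z p') <= b) -> (d < n)%N ->
  \sum_(i < ell) sget (@xmom R M tau ell u N z n i) d =
  \sum_p moment [pred p' | p != p'] (fun=> 1) (fun p' => tau (z p) (z p')) d.
Proof.
move=> ab u0 u_ell u_incr z_in dn.
under eq_bigr do rewrite /sget insubT /= /xmom.
rewrite exchange_big; apply: eq_bigr => p _; rewrite /moment.
under eq_bigr do rewrite big_mkcondr.
rewrite exchange_big /=; apply: eq_bigr => p' pp'.
by rewrite -big_mkcond mul1r (big_in_piece ab u0 u_ell u_incr) // z_in.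
Qed.

End CodeMoments.

Section GramMatrix.
Variables (R : realType) (M : Type) (tau : M -> M -> R) (tau0 : R).
Variables (Phi : nat -> {poly R}) (k : nat).
Hypotheses (tau_sym : forall x y, tau x y = tau y x) (tau_diag : forall x, tau x x = tau0).
Hypotheses (Phi_size : (size (Phi k) <= k.+1)%N) (Phi_norm : (Phi k).[tau0] = 1).
Hypothesis Phi_psd : forall n (z : 'I_n -> M),
  psd (\matrix_(i < n, j < n) (Phi k).[tau (z i) (z j)]).

(* G_k is the Phi_k-kernel matrix on q_1..q_r and the code, with the code's
   rows and columns summed into one. *)
Lemma Gmx_code_psd r (q : 'I_r -> M) N (z : 'I_N -> M) ell n
    (x : 'I_ell -> 'I_n -> R) (y : 'I_r -> 'I_n -> R) :
  (forall d, (d < k.+1)%N -> \sum_i sget (x i) d =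
     \sum_p moment [pred p' | p != p'] (fun=> 1) (fun p' => tau (z p) (z p')) d) ->
  (forall i d, (d < k.+1)%N ->
     sget (y i) d = moment predT (fun=> 1) (fun p => tau (z p) (q i)) d) ->
  psd (Gmx tau Phi k q N%:R x y).
Proof.
move=> x_pairs y_points.
pose zz (i : 'I_(r + N)) := match split i with inl i => q i | inr p => z p end.
have := psd_merge_tail (Phi_psd zz); congr psd.
apply: esym; rewrite /Gmx; congr block_mx; apply/matrixP => i j; rewrite !mxE /zz.
- by rewrite (unsplitK (inl _ i)) (unsplitK (inl _ j)).
- under eq_bigr => d _ do [rewrite y_points; last exact: ltn_ord d].
  rewrite horner_moment //; apply: eq_bigr => p _.
  by rewrite !mxE (unsplitK (inl _ i)) (unsplitK (inr _ p)) mul1r tau_sym.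
- under eq_bigr => d _ do [rewrite y_points; last exact: ltn_ord d].
  rewrite horner_moment //; apply: eq_bigr => p _.
  by rewrite !mxE (unsplitK (inl _ j)) (unsplitK (inr _ p)) mul1r.
- under eq_bigr => d _ do [rewrite x_pairs ?mulr_sumr; last exact: ltn_ord d].
  rewrite !ord1 eqxx mulr1n exchange_big -[N in N%:R]card_ord -sumr_const -big_split.
  apply: eq_bigr => p _; rewrite horner_moment // [RHS](bigD1 p) //= !mxE.
  rewrite (unsplitK (inr _ p)) tau_diag Phi_norm; congr (_ + _).
  apply: eq_big => [p' | p' _]; first by rewrite eq_sym.
  by rewrite !mxE (unsplitK (inr _ p)) (unsplitK (inr _ p')) mul1r.
Qed.

End GramMatrix.

Section CodeFeasibility.
Variables (R : realType) (M : Type) (tau : M -> M -> R) (tau0 : R) (Phi : nat -> {poly R}).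
Hypotheses (tau_sym : forall x y, tau x y = tau y x) (tau_diag : forall x, tau x x = tau0).
Hypotheses (Phi_size : forall k, size (Phi k) = k.+1) (Phi_norm : forall k, (Phi k).[tau0] = 1).
Hypothesis Phi_psd : forall k N (z : 'I_N -> M),
  psd (\matrix_(i < N, j < N) (Phi k).[tau (z i) (z j)]).
Variables (a b : R) (m r : nat) (q : 'I_r -> M) (al be : 'I_r -> \bar R).
Hypotheses (ab : a < b) (m_gt0 : (0 < m)%N).
Variables (Pi : set M) (ell : nat) (u : nat -> R).
Hypothesis Pi_sub : Pi `<=` Pi1 tau q al be.
Hypotheses (u0 : u 0%N = a) (u_ell : u ell = b) (u_incr : forall i, (i < ell)%N -> u i < u i.+1).
Variable Acons : R -> ('I_ell -> 'I_(2 * m) -> R) -> Prop.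
Hypothesis Acons_codes : forall N (z : 'I_N -> M),
  Scode_in tau a b Pi z -> Acons N%:R (@xmom R M tau ell u N z (2 * m)).

Lemma Scode_feasible N (z : 'I_N -> M) :
  Scode_in tau a b Pi z -> feasible_c tau Phi q al be u Acons N%:R.
Proof.
move=> z_code; have [_ [z_Pi z_S]] := z_code.
pose y i (d : 'I_(2 * m)) := moment predT (fun=> 1) (fun p => tau (z p) (q i)) d.
have y_sget i d : (d < 2 * m)%N ->
    sget (y i) d = moment predT (fun=> 1) (fun p => tau (z p) (q i)) d.
  by move=> dm; rewrite /sget insubT.
have z_in p p' : p != p' -> a <= tau (z p) (z p') <= b by case/z_S.
exists (@xmom R M tau ell u N z (2 * m)), y; split; [|split; [|split; [|split]]].
- move=> i; rewrite y_sget ?muln_gt0 // /moment.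
  by under eq_bigr do rewrite expr0 mulr1; rewrite sumr_const card_ord.
- move=> i; apply: Hmx_psd (sget_xmom tau z u i) _ _ _ _ => [//|j /andP[_]].
  by rewrite /in_piece; case: ifP => _ /andP[-> ut] //=; exact: ltW.
- exact: Acons_codes.
- move=> k; apply: Gmx_code_psd => //; first by rewrite Phi_size.
  + by move=> d dk; apply: (sum_xmom ab) => //; exact: leq_trans dk (ltn_ord k).
  + by move=> i d dk; apply: y_sget; exact: leq_trans dk (ltn_ord k).
- move=> i; apply: (Hm_psd_ext_moment (y_sget i)) => // p _.
  by have [-> ->] := Pi_sub (z_Pi p) i.
Qed.

End CodeFeasibility.

Theorem theorem7p2 (R : realType) (M : Type) (tau : M -> M -> R) (tau0 : R)
  (Phi : nat -> {poly R})
  (Htpt : two_point_homogeneous tau)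
  (Hsym : forall x y, tau x y = tau y x)
  (Htau0 : forall x, tau x x = tau0)
  (Hdeg : forall k, size (Phi k) = k.+1)
  (Hnorm : forall k, (Phi k).[tau0] = 1)
  (Hpd : forall (k N : nat) (z : 'I_N -> M),
           psd (\matrix_(i < N, j < N) (Phi k).[tau (z i) (z j)]))
  (a b : R) (Hab : a < b) (m : nat) (Hm : (0 < m)%N)
  (r : nat) (q : 'I_r -> M) (al be : 'I_r -> \bar R)
  (Halbe : forall i, (al i <= be i)%E)
  (Pi : set M) (HPi : Pi `<=` Pi1 tau q al be)
  (ell : nat) (u : nat -> R) (Hu0 : u 0%N = a) (Hul : u ell = b)
  (Hu : forall i, (i < ell)%N -> u i < u i.+1)
  (Acons : R -> ('I_ell -> 'I_(2 * m) -> R) -> Prop)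
  (HA : forall (N : nat) (z : 'I_N -> M), Scode_in tau a b Pi z ->
          Acons N%:R (@xmom R M tau ell u N z (2 * m)))
  : (Acode tau a b Pi <= @cstar R M tau Phi m r q al be ell u Acons)%E.
Proof.
apply: ge_ereal_sup => _ [N [z z_code] <-].
apply: ereal_sup_ubound; exists N%:R => //.
exact: (Scode_feasible Hsym Htau0 Hdeg Hnorm Hpd Hab Hm HPi Hu0 Hul Hu HA z_code).
Qed.
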